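(* Consider two settings $(a,c,P,\phi)$ and $(a',c',P',\phi)$ as described in the context. Suppose $a\ge a'$, $c\le c'$, and either $\widetilde P\ge_{FOSD}\widetilde{P'}$ (for the degree marginals) or the degree marginal of $P$ is a mean-preserving spread of that of $P'$, with at least one of these relations strict. Then for every $\theta_i\in\Theta$ and all $d_i>d_i'$ in $D$, $$x^{friend}_{a,c,P}(\theta_i,d_i)-x^{friend}_{a,c,P}(\theta_i,d_i')>x^{friend}_{a',c',P'}(\theta_i,d_i)-x^{friend}_{a',c',P'}(\theta_i,d_i')$$ and $$U^{friend}_{a,c,P}(\theta_i,d_i)-U^{friend}_{a,c,P}(\theta_i,d_i')>U^{friend}_{a',c',P'}(\theta_i,d_i)-U^{friend}_{a',c',P'}(\theta_i,d_i').$$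
   Context: Fix an integer $n\ge2$, $\phi\in\mathbb{R}$, a compact set $\Theta\subset[0,\infty)$ of types, and $D=\{1,\dots,n-1\}$. A setting $(a,c,P,\phi)$ consists of $a>0$, $c>0$ and a probability distribution $P$ on $\Theta\times D$ (joint type/degree distribution of a generic potential neighbor); $\mathrm{E}_P$ is expectation under $P$, and the neighbor distribution $\widetilde P$ is given by $\widetilde{\mathrm{E}}_P[h(\theta,d)]=\mathrm{E}_P[d\,h(\theta,d)]/\mathrm{E}_P[d]$. In each of the two settings assume $c>a\,\widetilde{\mathrm{E}}_P[d]$ and $\widetilde{\mathrm{E}}_P[\theta]=\mathrm{E}_P[\theta]$; the type marginals of $P$ and $P'$ coincide and put positive probability on $\theta>0$. A strategy is a bounded measurable $x:\Theta\times D\to[0,\infty)$, used by all agents; in the friend game of a setting, an agent of type $\theta_i$ and degree $d_i$ choosing $y\ge0$ when others use $x$ gets $EU^{friend}(y;\theta_i,d_i;x)=\theta_i y+a\,y\,d_i\widetilde{\mathrm{E}}_P[x(\theta,d)]-\frac{c}{2}y^2+\phi(n-1)\mathrm{E}_P[x(\theta,d)]$. A Bayesian equilibrium is a strategy $x$ such that for every $(\theta_i,d_i)$, $x(\theta_i,d_i)$ maximizes this payoff over $y\ge0$ given others use $x$; it exists and is unique, and is denoted $x^{friend}_{a,c,P}$. Let $U^{friend}_{a,c,P}(\theta_i,d_i)=EU^{friend}(x^{friend}_{a,c,P}(\theta_i,d_i);\theta_i,d_i;x^{friend}_{a,c,P})$. $\ge_{FOSD}$ denotes first-order stochastic dominance.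 *)

From HB Require Import structures.
From mathcomp Require Import all_boot all_order all_algebra.
From mathcomp Require Import all_classical all_reals all_analysis.
Set Implicit Arguments. Unset Strict Implicit. Unset Printing Implicit Defensive.
Import Order.TTheory GRing.Theory Num.Theory.
Import numFieldNormedType.Exports.
Local Open Scope classical_set_scope.
Local Open Scope ring_scope.

(* A generic potential neighbor is a pair z = (theta, d) : R * R;
   z.1 is the type, z.2 the degree.  P is a probability on R * R
   (Borel product sigma-algebra) supported on Theta x D. *)

Section Defs.
Variable R : realType.
Notation prob := (probability (R * R)%type R).

Definition degset (n : nat) : set R :=
  [set d | exists k : nat, (1 <= k)%N /\ (k <= n.-1)%N /\ d = k%:R].

Definition Ex (P : prob) (h : R * R -> R) : R :=
  fine (\int[P]_z (h z)%:E).

(* neighbor expectation: Ẽ_P[h] = E_P[d h] / E_P[d] *)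
Definition Ext (P : prob) (h : R * R -> R) : R :=
  Ex P (fun z => z.2 * h z) / Ex P (fun z => z.2).

Definition setting (Theta : set R) (n : nat) (a c : R) (P : prob) : Prop :=
  [/\ 0 < a /\ 0 < c,
      P (Theta `*` degset n) = 1%E,
      a * Ext P snd < c,
      Ext P fst = Ex P fst
    & (0 < P [set z : R * R | (0 < z.1)%R])%E].

(* a strategy: bounded measurable x : Theta x D -> [0, oo)
   (represented as a measurable function on R * R; only its values on
   Theta x D matter) *)
Definition strategy (Theta : set R) (n : nat) (x : R * R -> R) : Prop :=
  [/\ measurable_fun setT x,
      (exists M : R, forall z, (Theta `*` degset n) z -> `|x z| <= M)
    & forall z, (Theta `*` degset n) z -> 0 <= x z].

Definition EUfriend (n : nat) (a c phi : R) (P : prob) (x : R * R -> R)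
  (thi di y : R) : R :=
  thi * y + a * y * di * Ext P x - c / 2 * y ^+ 2 + phi * (n.-1)%:R * Ex P x.

Definition friend_eq (Theta : set R) (n : nat) (a c phi : R) (P : prob)
  (x : R * R -> R) : Prop :=
  strategy Theta n x /\
  forall thi di, Theta thi -> degset n di ->
    forall y, 0 <= y ->
      EUfriend n a c phi P x thi di y <= EUfriend n a c phi P x thi di (x (thi, di)).

Definition Ufriend (n : nat) (a c phi : R) (P : prob) (x : R * R -> R)
  (thi di : R) : R :=
  EUfriend n a c phi P x thi di (x (thi, di)).

Definition ind_ge (t : R) (z : R * R) : R := ((t <= z.2)%R : bool)%:R.

Definition fosd_tilde (P P' : prob) : Prop :=
  forall t : R, Ext P' (ind_ge t) <= Ext P (ind_ge t).
Definition strict_fosd_tilde (P P' : prob) : Prop :=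
  fosd_tilde P P' /\ exists t : R, Ext P' (ind_ge t) < Ext P (ind_ge t).

Definition convex_fun (f : R -> R) : Prop :=
  forall u v t : R, 0 <= t <= 1 ->
    f (t * u + (1 - t) * v) <= t * f u + (1 - t) * f v.

(* degree marginal of P is a mean-preserving spread of that of P'
   (Rothschild-Stiglitz: same mean, larger in the convex order) *)
Definition mps (P P' : prob) : Prop :=
  Ex P snd = Ex P' snd /\
  forall f : R -> R, convex_fun f -> Ex P' (fun z => f z.2) <= Ex P (fun z => f z.2).
Definition strict_mps (P P' : prob) : Prop :=
  mps P P' /\ exists t : R, Ex P (ind_ge t) <> Ex P' (ind_ge t).

End Defs.

From HB Require Import structures.
From mathcomp Require Import all_boot all_order all_algebra.
From mathcomp Require Import all_classical all_reals all_analysis.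
From mathcomp Require Import measurable_realfun.
From mathcomp Require Import ring lra zify.
Set Implicit Arguments.
Unset Strict Implicit.
Unset Printing Implicit Defensive.
Import Order.TTheory GRing.Theory Num.Theory.
Import numFieldNormedType.Exports.
Local Open Scope classical_set_scope.
Local Open Scope ring_scope.

(* In equilibrium the first-order condition gives x(theta, d) = (theta + a d X) / c
   with X = E~[x]; averaging it against the neighbor distribution and using
   E~[theta] = E[theta] gives X = E[theta] / (c - a E~[d]).  Hence
   x(theta, d) - x(theta, d') = (d - d') a X / c, and since the equilibrium utility
   is c x^2 / 2 up to a constant,
   U(theta, d) - U(theta, d') = (x(theta, d) - x(theta, d')) (theta + (d + d') a X / 2).
   Both claims thus reduce to a X / c and a X increasing when a rises, c falls or
   E~[d] rises.  For integer degrees E~[d] = sum_k P~(d >= k), which is monotone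
   under first-order dominance of P~.  Under a mean-preserving spread E[d] is fixed
   and E~[d] = E[d^2] / E[d], where E[d^2] = E[d] + 2 sum_k E[(d - k)^+] is a sum
   of terms monotone in the convex order; if they all coincide, so do the tail
   probabilities P(d >= k) = E[(d - k + 1)^+] - E[(d - k)^+]. *)

Section Expectation.
Variables (R : realType) (S : set (R * R)).

Definition bounded_meas (h : R * R -> R) :=
  measurable_fun setT h /\ exists M, forall z, S z -> `|h z| <= M.

Lemma bounded_meas_cst k : bounded_meas (fun=> k).
Proof. by split; [exact: measurable_cst | exists `|k|]. Qed.

Lemma bounded_measD h g :
  bounded_meas h -> bounded_meas g -> bounded_meas (fun z => h z + g z).
Proof.
move=> [mh [M1 hM1]] [mg [M2 hM2]]; split; first exact: measurable_funD.
exists (M1 + M2) => z Sz; rewrite (le_trans (ler_normD _ _)) //.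
by rewrite lerD ?hM1 ?hM2.
Qed.

Lemma bounded_measM h g :
  bounded_meas h -> bounded_meas g -> bounded_meas (fun z => h z * g z).
Proof.
move=> [mh [M1 hM1]] [mg [M2 hM2]]; split; first exact: measurable_funM.
by exists (M1 * M2) => z Sz; rewrite normrM ler_pM ?hM1 ?hM2.
Qed.

Lemma bounded_measZ k h : bounded_meas h -> bounded_meas (fun z => k * h z).
Proof. exact/bounded_measM/bounded_meas_cst. Qed.

Lemma bounded_meas_sum N (f : nat -> R * R -> R) :
  (forall k, bounded_meas (f k)) -> bounded_meas (fun z => \sum_(k < N) f k z).
Proof.
move=> bf; elim: N => [|N IH].
  by under eq_fun do rewrite big_ord0; exact: bounded_meas_cst.
by under eq_fun do rewrite big_ord_recr; exact: bounded_measD.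
Qed.

Variable P : probability (R * R)%type R.
Hypotheses (mS : measurable S) (PS : P S = 1%E).

Let PSC : P (~` S) = 0%E.
Proof. by rewrite probability_setC // PS subee. Qed.

Lemma bounded_meas_integrable h :
  bounded_meas h -> P.-integrable setT (EFin \o h).
Proof.
move=> [mh [M hM]]; apply/integrableP; split; first exact/measurable_EFinP.
apply: (@le_lt_trans _ _ (\int[P]_z (cst `|M|%:E z))%E); last first.
  by rewrite integral_cst // [X in (_ * X)%E](_ : _ = 1%E) ?mule1 ?ltry //;
    exact: probability_setT.
apply: ae_ge0_le_integral => //.
- exact/measurableT_comp/measurable_EFinP.
- by move=> z _; rewrite lee_fin.
exists (~` S); split => //; first exact: measurableC.
move=> z /= nle Sz; apply: nle => _.
by rewrite lee_fin (le_trans (hM z Sz)) // ler_norm.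
Qed.

Lemma eq_Ex h g : measurable_fun setT h -> measurable_fun setT g ->
  (forall z, S z -> h z = g z) -> Ex P h = Ex P g.
Proof.
move=> mh mg hg; congr fine; apply: ae_eq_integral => //;
  try exact/measurable_EFinP.
exists (~` S); split => //; first exact: measurableC.
by move=> z /= neq Sz; apply: neq => _; rewrite hg.
Qed.

Lemma ExD h g : bounded_meas h -> bounded_meas g ->
  Ex P (fun z => h z + g z) = Ex P h + Ex P g.
Proof.
move=> bh bg; rewrite /Ex; under eq_integral do rewrite EFinD.
rewrite integralD //; try exact: bounded_meas_integrable.
by rewrite fineD //; exact/integrable_fin_num/bounded_meas_integrable.
Qed.

Lemma ExZl k h : bounded_meas h -> Ex P (fun z => k * h z) = k * Ex P h.
Proof.
move=> bh; rewrite /Ex; under eq_integral do rewrite EFinM.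
rewrite integralZl //; last exact: bounded_meas_integrable.
by rewrite fineM //; exact/integrable_fin_num/bounded_meas_integrable.
Qed.

Lemma ExB h g : bounded_meas h -> bounded_meas g ->
  Ex P (fun z => h z - g z) = Ex P h - Ex P g.
Proof.
move=> bh bg; under eq_fun do rewrite -mulN1r.
by rewrite ExD ?ExZl ?mulN1r //; exact: bounded_measZ.
Qed.

Lemma Ex_cst k : Ex P (fun=> k) = k.
Proof.
rewrite /Ex integral_cst // [X in (_ * X)%E](_ : _ = 1%E) ?mule1 //.
exact: probability_setT.
Qed.

Lemma Ex_sum N (f : nat -> R * R -> R) : (forall k, bounded_meas (f k)) ->
  Ex P (fun z => \sum_(k < N) f k z) = \sum_(k < N) Ex P (f k).
Proof.
move=> bf; elim: N => [|N IH].
  by under eq_fun do rewrite big_ord0; rewrite Ex_cst big_ord0.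
under eq_fun do rewrite big_ord_recr.
by rewrite ExD ?IH ?big_ord_recr //; exact: bounded_meas_sum.
Qed.

Lemma Ex_ge0 (f : R * R -> R) : measurable_fun setT f ->
  (forall z, S z -> 0 <= f z) -> 0 <= Ex P f.
Proof.
move=> mf f0; rewrite (@eq_Ex f (fun z => Num.max (f z) 0)) //.
- by apply/fine_ge0/integral_ge0 => z _; rewrite lee_fin le_max lexx orbT.
- exact: measurable_maxr.
- by move=> z Sz; rewrite max_l ?f0.
Qed.

Lemma le_Ex h g : bounded_meas h -> bounded_meas g ->
  (forall z, S z -> h z <= g z) -> Ex P h <= Ex P g.
Proof.
move=> bh bg hg; rewrite -subr_ge0 -ExB //.
apply: Ex_ge0 => [|z Sz]; last by rewrite subr_ge0 hg.
by case: (bounded_measD bg (bounded_measZ (-1) bh)); under eq_fun do rewrite mulN1r.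
Qed.

Lemma eq_Ext h g : measurable_fun setT h -> measurable_fun setT g ->
  (forall z, S z -> h z = g z) -> Ext P h = Ext P g.
Proof.
move=> mh mg hg; congr (_ / _); apply: eq_Ex => [| |z Sz]; last by rewrite hg.
  exact/measurable_funM.
exact/measurable_funM.
Qed.

End Expectation.

Lemma sum_ltn_ord N j : (\sum_(k < N) (k < j) = minn N j)%N.
Proof.
elim: N => [|N IH]; first by rewrite big_ord0 min0n.
by rewrite big_ord_recr /= IH; case: leqP => h; lia.
Qed.

Lemma sqrn_sum_subn N j : (j <= N.+1)%N ->
  (j * j = j + 2 * \sum_(k < N) (j - k.+1))%N.
Proof.
elim: j => [|j IH] jN; first by rewrite big1 // => k _; rewrite sub0n.
have -> : (\sum_(k < N) (j.+1 - k.+1) =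
    \sum_(k < N) (j - k.+1) + \sum_(k < N) (k < j))%N.
  by rewrite -big_split; apply: eq_bigr => k _ /=; case: leqP => h; lia.
by rewrite sum_ltn_ord; have := IH (ltnW jN); lia.
Qed.

Lemma max_natrB (R : realDomainType) (p q : nat) :
  Num.max (p%:R - q%:R) 0 = (p - q)%:R :> R.
Proof.
have [qp|pq] := leqP q p; first by rewrite max_l -?natrB // subr_ge0 ler_nat.
by rewrite max_r ?subr_le0 ?ler_nat ?(ltnW pq) // (_ : p - q = 0)%N //; lia.
Qed.

Lemma nat_threshold (R : realDomainType) (t : R) N : (0 < N)%N ->
  exists2 K, (0 < K <= N)%N &
    forall j, (0 < j < N)%N -> (t <= j%:R) = (K <= j)%N.
Proof.
move=> N0; pose p k := (0 < k)%N && ((t <= k%:R) || (N <= k)%N).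
have pN : exists k, p k by exists N; rewrite /p N0 leqnn orbT.
case: (ex_minnP pN) => K /andP[K0 tK] Kmin.
exists K => [|j /andP[j0 jN]]; first by rewrite K0 Kmin // /p N0 leqnn orbT.
apply/idP/idP => [tj|Kj]; first by apply: Kmin; rewrite /p j0 tj.
case/orP: tK => [tK|NK]; first by rewrite (le_trans tK) // ler_nat.
by move: (leq_trans NK Kj); rewrite leqNgt jN.
Qed.

Definition excess (R : realType) (k : R) (z : R * R) : R := Num.max (z.2 - k) 0.

Lemma convex_sqr (R : realType) : convex_fun (fun r : R => r * r).
Proof.
move=> u v t /andP[t0 t1].
have : 0 <= t * (1 - t) * ((u - v) * (u - v)).
  by apply: mulr_ge0; [rewrite mulr_ge0 ?subr_ge0 | rewrite -expr2 sqr_ge0].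
lra.
Qed.

Lemma convex_excess (R : realType) (k : R) :
  convex_fun (fun r : R => Num.max (r - k) 0).
Proof.
move=> u v t /andP[t0 t1]; rewrite ge_max; apply/andP; split.
  have : t * (u - k) <= t * Num.max (u - k) 0 by rewrite ler_wpM2l ?le_max ?lexx.
  have : (1 - t) * (v - k) <= (1 - t) * Num.max (v - k) 0.
    by rewrite ler_wpM2l ?subr_ge0 ?le_max ?lexx.
  lra.
by rewrite addr_ge0 // mulr_ge0 ?subr_ge0 // le_max lexx orbT.
Qed.

Section Support.
Variables (R : realType) (n : nat) (Theta : set R).
Hypotheses (cT : compact Theta) (T0 : Theta `<=` `[0, +oo[).

Definition supp : set (R * R) := Theta `*` degset n.

Lemma measurable_degset : measurable (degset n : set R).
Proof.
rewrite (_ : degset n = \bigcup_(k in [set k | (1 <= k <= n.-1)%N]) [set k%:R]).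
  by apply: bigcup_measurable => k _; exact: measurable_set1.
apply/seteqP; split => d /=.
  by case=> k [k1 [kn ->]]; exists k => //; apply/andP.
by case=> k /andP[k1 kn] ->; exists k.
Qed.

Lemma measurable_supp : measurable supp.
Proof.
apply: measurableX; last exact: measurable_degset.
by apply: closed_measurable; apply: compact_closed => //; exact: hausdorff_space.
Qed.

Lemma degsetP (d : R) : degset n d -> exists2 j : nat, (1 <= j <= n.-1)%N & d = j%:R.
Proof. by case=> j [j1 [jn ->]]; exists j; rewrite ?j1. Qed.

Lemma supp_fst_ge0 z : supp z -> 0 <= z.1.
Proof. by case=> /T0; rewrite /= in_itv /= andbT. Qed.

Lemma supp_sndP z : supp z -> exists2 j : nat, (1 <= j <= n.-1)%N & z.2 = j%:R.
Proof. by case=> _ /degsetP. Qed.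

Lemma bounded_meas_fst : bounded_meas supp fst.
Proof.
split; first exact: measurable_fst.
have [M [_ hM]] := compact_bounded cT.
by exists (M + 1) => z [Tz _]; apply: hM Tz; rewrite ltrDl.
Qed.

Lemma bounded_meas_snd : bounded_meas supp snd.
Proof.
split; first exact: measurable_snd.
exists n%:R => z /supp_sndP[j /andP[_ jn] ->].
by rewrite normr_nat ler_nat (leq_trans jn) // leq_pred.
Qed.

Lemma measurable_ind_ge (t : R) : measurable_fun setT (ind_ge t).
Proof.
rewrite (_ : ind_ge t = \1_(snd @^-1` `[t, +oo[)).
  apply/measurable_indic; rewrite -[_ @^-1` _]setTI.
  by apply: measurable_snd => //; exact: measurable_itv.
apply/funext => z; rewrite /ind_ge indicE.
have [tz|tz] := boolP (t <= z.2).
  by rewrite mem_set //= in_itv /= tz.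
by rewrite memNset //= in_itv /= andbT; exact/negP.
Qed.

Lemma bounded_meas_ind_ge (t : R) : bounded_meas supp (ind_ge t).
Proof.
split; first exact: measurable_ind_ge.
by exists 1 => z _; rewrite /ind_ge; case: (t <= z.2); rewrite normr_nat.
Qed.

Lemma bounded_meas_excess (k : R) : bounded_meas supp (excess k).
Proof.
have [mh [M hM]] := bounded_meas_snd.
split; first exact/measurable_maxr/measurable_cst/measurable_funB.
exists (M + `|k|) => z Sz.
have M0 : 0 <= M by apply: le_trans (normr_ge0 _) (hM z Sz).
rewrite ger0_norm ?le_max ?lexx ?orbT // ge_max addr_ge0 // andbT.
by rewrite (le_trans (ler_norm _)) // (le_trans (ler_normB _ _)) // lerD2r hM.
Qed.

Lemma ind_ge_nat_threshold (t : R) : (0 < n)%N ->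
  exists2 K : nat, (0 < K <= n)%N &
    forall z, supp z -> ind_ge t z = ind_ge K%:R z.
Proof.
move=> n0; have [K K0n tK] := nat_threshold t n0.
exists K => // z /supp_sndP[j /andP[j0 jn] zj].
by rewrite /ind_ge zj ler_nat tK // j0 (leq_ltn_trans jn) // ltn_predL.
Qed.

End Support.

Section DegreeMoments.
Variables (R : realType) (n : nat) (Theta : set R) (P : probability (R * R)%type R).
Hypotheses (cT : compact Theta) (PS : P (supp n Theta) = 1%E).

Let mS : measurable (supp n Theta) := measurable_supp n cT.
Let bsnd : bounded_meas (supp n Theta) snd := bounded_meas_snd n Theta.
Let bexcess k : bounded_meas (supp n Theta) (excess k) :=
  bounded_meas_excess n Theta k.

Lemma Ex_snd_ge1 : 1 <= Ex P snd.
Proof.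
rewrite -(Ex_cst P 1); apply: (le_Ex mS PS) => //; first exact: bounded_meas_cst.
by move=> z /supp_sndP[j /andP[j1 _] ->]; rewrite ler1n.
Qed.

Lemma Ext_ge0 (h : R * R -> R) : measurable_fun setT h ->
  (forall z, supp n Theta z -> 0 <= h z) -> 0 <= Ext P h.
Proof.
move=> mh h0; apply: divr_ge0; last exact: le_trans ler01 Ex_snd_ge1.
apply: (Ex_ge0 mS PS) => [|z Sz].
  by apply: measurable_funM => //; exact: measurable_snd.
by rewrite mulr_ge0 ?h0 //; case: (supp_sndP Sz) => j _ ->.
Qed.

Lemma Ext_snd_tail_sum : Ext P snd = \sum_(k < n) Ext P (ind_ge k.+1%:R).
Proof.
pose f k (z : R * R) := z.2 * ind_ge k.+1%:R z.
have bf k : bounded_meas (supp n Theta) (f k).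
  exact/bounded_measM/bounded_meas_ind_ge.
rewrite /Ext -mulr_suml -(Ex_sum mS PS n (f := f)) //; congr (_ / _).
apply: (eq_Ex mS PS) => [||z /supp_sndP[j /andP[_ jn] zj]].
- by apply: measurable_funM; exact: measurable_snd.
- exact: (bounded_meas_sum n bf).1.
rewrite /f /ind_ge zj -mulr_sumr; congr (_ * _).
under eq_bigr do rewrite ler_nat.
by rewrite -natr_sum sum_ltn_ord (minn_idPr _) // (leq_trans jn) // leq_pred.
Qed.

Lemma Ex_sqr_snd :
  Ex P (fun z => z.2 * z.2) = Ex P snd + 2 * \sum_(k < n) Ex P (excess k.+1%:R).
Proof.
have bs := bounded_meas_sum n (fun k => bexcess k.+1%:R).
rewrite -(Ex_sum mS PS n (f := fun k => excess k.+1%:R)) //.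
rewrite -(ExZl mS PS) // -(ExD mS PS) //; last exact: bounded_measZ.
apply: (eq_Ex mS PS) => [||z /supp_sndP[j /andP[_ jn] zj]].
- by apply: measurable_funM; exact: measurable_snd.
- exact: (bounded_measD bsnd (bounded_measZ 2 bs)).1.
rewrite /excess zj; under eq_bigr do rewrite max_natrB.
rewrite -natr_sum -!natrM -natrD (sqrn_sum_subn (N := n)) //.
by rewrite (leq_trans jn) // (leq_trans (leq_pred n)).
Qed.

Lemma Ex_excess0 : Ex P (excess 0) = Ex P snd.
Proof.
apply: (eq_Ex mS PS) => [||z /supp_sndP[j _ zj]]; try exact: measurable_snd.
  exact: (bexcess 0).1.
by rewrite /excess zj subr0 max_l.
Qed.

Lemma Ex_ind_ge_excess K : (0 < K)%N ->
  Ex P (ind_ge K%:R) = Ex P (excess K.-1%:R) - Ex P (excess K%:R).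
Proof.
move=> K0; rewrite -(ExB mS PS) //.
apply: (eq_Ex mS PS) => [||z /supp_sndP[j _ zj]]; first exact: measurable_ind_ge.
  by apply: measurable_funB; exact: (bexcess _).1.
rewrite /ind_ge /excess zj !max_natrB ler_nat -natrB; last lia.
by congr (_%:R); case: leqP; lia.
Qed.

Lemma Ex_fst_gt0 : Theta `<=` `[0, +oo[ ->
  (0 < P [set z : R * R | (0 < z.1)%R])%E -> 0 < Ex P fst.
Proof.
move=> T0 Ppos; pose f (z : R * R) := Num.max z.1 0.
have f0 z : 0 <= f z by rewrite le_max lexx orbT.
have bf : bounded_meas (supp n Theta) f.
  have [mfst [M hM]] := bounded_meas_fst n cT.
  split; first exact/measurable_maxr/measurable_cst.
  by exists M => z Sz; rewrite /f max_l ?(supp_fst_ge0 T0 Sz) ?hM.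
have -> : Ex P fst = Ex P f.
  apply: (eq_Ex mS PS) bf.1 _ => [|z Sz]; first exact: measurable_fst.
  by rewrite /f max_l ?(supp_fst_ge0 T0 Sz).
have Ef_ge0 : 0 <= Ex P f := Ex_ge0 mS PS bf.1 (fun z _ => f0 z).
rewrite lt_def Ef_ge0 andbT; apply: contraTneq Ppos => Ef0.
have intf := bounded_meas_integrable mS PS bf.
have : ae_eq P setT (EFin \o f) (cst 0%E).
  apply/ae_eq_integral_abs => //; first by apply/measurable_EFinP; case: bf.
  under eq_integral do rewrite /= ger0_norm //.
  by rewrite -(fineK (integrable_fin_num _ intf)) //= -/(Ex P f) Ef0.
case=> N [mN PN0 sub]; rewrite -leNgt -PN0 le_measure ?inE //.
- have -> : [set z : R * R | 0 < z.1] = setT `&` (fst @^-1` `]0, +oo[).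
    by apply/seteqP; split => z /=; rewrite in_itv /= andbT => // [[]].
  by apply: measurable_fst => //; exact: measurable_itv.
- move=> z z0; apply: sub => /(_ I) /= /eqP.
  by rewrite eqe /f max_l ?(ltW z0) // gt_eqF.
Qed.

End DegreeMoments.

Section DegreeComparison.
Variables (R : realType) (n : nat) (Theta : set R).
Variables (P P' : probability (R * R)%type R).
Hypotheses (cT : compact Theta) (PS : P (supp n Theta) = 1%E)
  (PS' : P' (supp n Theta) = 1%E).

Let mS : measurable (supp n Theta) := measurable_supp n cT.

Lemma fosd_Ext_snd : fosd_tilde P P' -> Ext P' snd <= Ext P snd.
Proof.
move=> fosd; rewrite (Ext_snd_tail_sum cT PS) (Ext_snd_tail_sum cT PS').
by apply: ler_sum => k _; exact: fosd.
Qed.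

Lemma strict_fosd_Ext_snd : (0 < n)%N ->
  strict_fosd_tilde P P' -> Ext P' snd < Ext P snd.
Proof.
move=> n0 [fosd [t lt_t]].
have [K /andP[K0 Kn] tK] := ind_ge_nat_threshold Theta t n0.
have Kn' : (K.-1 < n)%N by rewrite prednK.
rewrite (Ext_snd_tail_sum cT PS) (Ext_snd_tail_sum cT PS').
rewrite (bigD1 (Ordinal Kn')) //= [X in _ < X](bigD1 (Ordinal Kn')) //=.
apply: ltr_leD; last by apply: ler_sum => k _; exact: fosd.
have ind_t (Q : probability (R * R)%type R) : Q (supp n Theta) = 1%E ->
    Ext Q (ind_ge t) = Ext Q (ind_ge K%:R).
  by move=> QS; exact: (eq_Ext mS QS (measurable_ind_ge _) (measurable_ind_ge _) tK).
by rewrite prednK // -(ind_t _ PS) -(ind_t _ PS').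
Qed.

Lemma mps_Ext_snd : mps P P' -> Ext P' snd <= Ext P snd.
Proof.
move=> [Emean convex]; rewrite /Ext -Emean.
rewrite ler_wpM2r ?invr_ge0 ?(le_trans ler01 (Ex_snd_ge1 cT PS)) //.
exact: (convex _ (@convex_sqr R)).
Qed.

Lemma mps_Ex_excess_eq : mps P P' -> Ext P' snd = Ext P snd ->
  forall k, (k <= n)%N -> Ex P' (excess k%:R) = Ex P (excess k%:R).
Proof.
move=> [Emean convex] Eq.
have sqr_eq : Ex P' (fun z => z.2 * z.2) = Ex P (fun z => z.2 * z.2).
  move: Eq; rewrite /Ext -Emean => /(congr1 ( *%R^~ (Ex P snd))).
  by rewrite !divfK // gt_eqF // (lt_le_trans ltr01 (Ex_snd_ge1 cT PS)).
have excess_le k : Ex P' (excess k) <= Ex P (excess k).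
  exact: (convex _ (convex_excess k)).
have sum0 : \sum_(k < n) (Ex P (excess k.+1%:R) - Ex P' (excess k.+1%:R)) = 0.
  move: sqr_eq; rewrite (Ex_sqr_snd cT PS) (Ex_sqr_snd cT PS') Emean.
  have two0 : (2 : R) != 0 by rewrite pnatr_eq0.
  by move=> /addrI /(mulfI two0) sum_eq; rewrite sumrB sum_eq subrr.
case=> [_|k kn]; first by rewrite (Ex_excess0 cT PS) (Ex_excess0 cT PS') Emean.
apply/esym/eqP; rewrite -subr_eq0; apply/eqP.
have ge0 (i : 'I_n) : true -> 0 <= Ex P (excess i.+1%:R) - Ex P' (excess i.+1%:R).
  by rewrite subr_ge0 excess_le.
exact: (psumr_eq0P ge0 sum0 (i := Ordinal kn)).
Qed.

Lemma strict_mps_Ext_snd : (0 < n)%N ->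
  strict_mps P P' -> Ext P' snd < Ext P snd.
Proof.
move=> n0 [mpsP [t neq_t]]; rewrite lt_def mps_Ext_snd // andbT.
apply/negP => /eqP/esym Eq; apply: neq_t.
have [K /andP[K0 Kn] tK] := ind_ge_nat_threshold Theta t n0.
have ind_t (Q : probability (R * R)%type R) : Q (supp n Theta) = 1%E ->
    Ex Q (ind_ge t) = Ex Q (ind_ge K%:R).
  by move=> QS; exact: (eq_Ex mS QS (measurable_ind_ge _) (measurable_ind_ge _) tK).
rewrite (ind_t _ PS) (ind_t _ PS').
rewrite (Ex_ind_ge_excess cT PS) // (Ex_ind_ge_excess cT PS') //.
by rewrite !(mps_Ex_excess_eq mpsP Eq) // (leq_trans (leq_pred K)).
Qed.

Lemma order_Ext_snd : fosd_tilde P P' \/ mps P P' -> Ext P' snd <= Ext P snd.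
Proof. by case=> [/fosd_Ext_snd|/mps_Ext_snd]. Qed.

Lemma strict_order_Ext_snd : (0 < n)%N ->
  strict_fosd_tilde P P' \/ strict_mps P P' -> Ext P' snd < Ext P snd.
Proof. by move=> n0 [/(strict_fosd_Ext_snd n0)|/(strict_mps_Ext_snd n0)]. Qed.

End DegreeComparison.

Lemma quadratic_argmax (R : realFieldType) (b c x : R) : 0 < c -> 0 <= b ->
  (forall y, 0 <= y -> b * y - c / 2 * y ^+ 2 <= b * x - c / 2 * x ^+ 2) ->
  x = b / c.
Proof.
move=> c0 b0 xmax; have := xmax (b / c) (divr_ge0 b0 (ltW c0)).
have -> : b * x - c / 2 * x ^+ 2 =
    b * (b / c) - c / 2 * (b / c) ^+ 2 - c / 2 * (x - b / c) ^+ 2.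
  by field; rewrite gt_eqF.
move=> le; have : c / 2 * (x - b / c) ^+ 2 <= 0 by lra.
rewrite pmulr_rle0 ?divr_gt0 // => sq_le0.
by apply/eqP; rewrite -subr_eq0 -sqrf_eq0 eq_le sq_le0 sqr_ge0.
Qed.

Section FriendEquilibrium.
Variables (R : realType) (n : nat) (phi : R) (Theta : set R) (a c : R).
Variables (P : probability (R * R)%type R) (x : R * R -> R).
Hypotheses (cT : compact Theta) (T0 : Theta `<=` `[0, +oo[).
Hypotheses (st : setting Theta n a c P) (eqx : friend_eq Theta n a c phi P x).

Let mS : measurable (supp n Theta) := measurable_supp n cT.
Let PS : P (supp n Theta) = 1%E. Proof. by case: st. Qed.
Let a0 : 0 < a. Proof. by case: st => [[]]. Qed.
Let c0 : 0 < c. Proof. by case: st => [[]]. Qed.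
Let x_ge0 z : supp n Theta z -> 0 <= x z.
Proof. by move=> Sz; case: eqx => -[_ _ +] _; apply. Qed.
Let bx : bounded_meas (supp n Theta) x.
Proof. by case: eqx => -[mx [M xM] _] _; split => //; exists M. Qed.

Lemma friend_eq_closed_form thi di : Theta thi -> degset n di ->
  x (thi, di) = (thi + a * di * Ext P x) / c.
Proof.
move=> Tthi Ddi; have [_ opt] := eqx.
have thi0 : 0 <= thi := supp_fst_ge0 T0 (z := (thi, di)) (conj Tthi Ddi).
have di0 : 0 <= di by case: (degsetP Ddi) => j _ ->.
apply: quadratic_argmax => // [|y y0].
  by rewrite addr_ge0 // mulr_ge0 ?(Ext_ge0 cT PS bx.1 x_ge0) // mulr_ge0 // ltW.
by have := opt thi di Tthi Ddi y y0; rewrite /EUfriend; lra.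
Qed.

Lemma Ext_friend_eq : Ext P x = Ex P fst / (c - a * Ext P snd).
Proof.
have [_ _ as_c Ext_fst _] := st.
set X := Ext P x; set s := Ext P snd.
have m0 : Ex P snd != 0 by rewrite gt_eqF // (lt_le_trans ltr01 (Ex_snd_ge1 cT PS)).
have bdf := bounded_measM (bounded_meas_snd n Theta) (bounded_meas_fst n cT).
have bdd := bounded_measM (bounded_meas_snd n Theta) (bounded_meas_snd n Theta).
have Edx : Ex P (fun z => z.2 * x z) =
    c^-1 * Ex P (fun z => z.2 * z.1) + (a * X / c) * Ex P (fun z => z.2 * z.2).
  rewrite -!(ExZl mS PS) // -(ExD mS PS); try exact: bounded_measZ.
  apply: (eq_Ex mS PS) => [||[thi di] [Tthi Ddi]].
  - by apply: measurable_funM; [exact: measurable_snd | exact: bx.1].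
  - exact: (bounded_measD (bounded_measZ _ bdf) (bounded_measZ _ bdd)).1.
  by rewrite /= friend_eq_closed_form // -/X; field; exact: lt0r_neq0.
have X_eq : X = c^-1 * Ext P fst + a * X / c * s.
  by rewrite [in LHS]/X /s /Ext Edx mulrDl -!mulrA.
apply/(canRL (mulfK _)); first by rewrite subr_eq0 gt_eqF.
by rewrite mulrBr {1}X_eq Ext_fst; field; exact: lt0r_neq0.
Qed.

Lemma Ufriend_closed_form thi di : Theta thi -> degset n di ->
  Ufriend n a c phi P x thi di = c / 2 * x (thi, di) ^+ 2 + phi * (n.-1)%:R * Ex P x.
Proof.
move=> Tthi Ddi; rewrite /Ufriend /EUfriend.
have thi_eq : thi = c * x (thi, di) - a * di * Ext P x.
  by rewrite friend_eq_closed_form //; field; exact: lt0r_neq0.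
by set xv := x (thi, di) in thi_eq *; rewrite thi_eq; field.
Qed.

Lemma friend_eq_subd thi di di' : Theta thi -> degset n di -> degset n di' ->
  x (thi, di) - x (thi, di') = (di - di') * (a * Ext P x / c).
Proof.
by move=> Tthi Ddi Ddi'; rewrite !friend_eq_closed_form //; field; exact: lt0r_neq0.
Qed.

Lemma Ufriend_subd thi di di' : Theta thi -> degset n di -> degset n di' ->
  Ufriend n a c phi P x thi di - Ufriend n a c phi P x thi di' =
  (x (thi, di) - x (thi, di')) * (thi + (di + di') * (a * Ext P x) / 2).
Proof.
move=> Tthi Ddi Ddi'; rewrite !Ufriend_closed_form // !friend_eq_closed_form //.
by field; exact: lt0r_neq0.
Qed.

End FriendEquilibrium.

Lemma Ex_fst_marginal (R : realType) (n : nat) (Theta : set R)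
    (P P' : probability (R * R)%type R) :
  compact Theta -> Theta `<=` `[0, +oo[ ->
  P (supp n Theta) = 1%E -> P' (supp n Theta) = 1%E ->
  (forall A : set R, measurable A -> P (A `*` setT) = P' (A `*` setT)) ->
  Ex P fst = Ex P' fst.
Proof.
move=> cT T0 PS PS' marg.
(* On the support fst is its own positive part, to which the change of
   variables for nonnegative integrands applies. *)
have Ex_push (Q : probability (R * R)%type R) : Q (supp n Theta) = 1%E ->
    Ex Q fst = fine (\int[pushforward Q fst]_r (Num.max r 0)%:E).
  move=> QS.
  rewrite (eq_Ex (measurable_supp n cT) QS (g := fun z => Num.max z.1 0)).
  - rewrite /Ex ge0_integral_pushforward //; last first.
      by move=> r _; rewrite lee_fin le_max lexx orbT.
    apply/measurable_EFinP; apply: measurable_maxr;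
      [exact: measurable_id | exact: measurable_cst].
  - exact: measurable_fst.
  - by apply: measurable_maxr; [exact: measurable_fst | exact: measurable_cst].
  - by move=> z Sz; rewrite max_l // (supp_fst_ge0 T0 Sz).
rewrite (Ex_push _ PS) (Ex_push _ PS'); congr fine.
apply: eq_measure_integral => A mA _.
change (P (fst @^-1` A) = P' (fst @^-1` A)).
rewrite (_ : fst @^-1` A = A `*` setT) ?marg //.
by apply/seteqP; split => z //= [].
Qed.

Lemma spillover_cmp (R : realFieldType) (e a c s X a' c' s' X' : R) :
  0 < e -> 0 < a' -> a' <= a -> 0 < c -> c <= c' -> 0 <= s' -> s' <= s ->
  a * s < c -> a' * s' < c' -> a' < a \/ c < c' \/ s' < s ->
  X = e / (c - a * s) -> X' = e / (c' - a' * s') ->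
  [/\ 0 < a' * X', a' * X' <= a * X & a' * X' / c' < a * X / c].
Proof.
move=> e0 a'0 aa c0 cc s'0 ss asc asc' strict -> ->.
have D0 : 0 < c - a * s by rewrite subr_gt0.
have D'0 : 0 < c' - a' * s' by rewrite subr_gt0.
have DD : c - a * s <= c' - a' * s' by rewrite lerB // ler_pM // ltW.
have eD : e / (c' - a' * s') <= e / (c - a * s).
  by rewrite ler_wpM2l ?(ltW e0) // lef_pV2 ?posrE.
have c'0 : 0 < c' := lt_le_trans c0 cc.
have cV : c'^-1 <= c^-1 by rewrite lef_pV2 ?posrE.
have ac : a' / c' <= a / c by apply: ler_pM; rewrite // ?invr_ge0 ltW.
have k0 : 0 < a' / c' by rewrite divr_gt0 // c'0.
split; first by rewrite mulr_gt0 ?divr_gt0.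
  by rewrite ler_pM ?(ltW a'0) ?divr_ge0 ?(ltW e0) ?(ltW D'0).
rewrite [_ * _ / c']mulrAC [_ * _ / c]mulrAC.
have a0 : 0 < a := lt_le_trans a'0 aa.
have lt_k : a' < a \/ c < c' -> a' / c' < a / c.
  case=> [lt_aa|lt_cc].
    apply: (lt_le_trans (y := a / c')); first by rewrite ltr_pM2r ?invr_gt0.
    by rewrite ler_wpM2l // ltW.
  apply: (lt_le_trans (y := a' / c)); last by rewrite ler_wpM2r // invr_ge0 ltW.
  by rewrite ltr_pM2l // ltf_pV2 ?posrE.
case: strict => [lt_aa|[lt_cc|lt_ss]].
- apply: (le_lt_trans (ler_wpM2l (ltW k0) eD)).
  by rewrite ltr_pM2r ?divr_gt0 // lt_k //; left.
- apply: (le_lt_trans (ler_wpM2l (ltW k0) eD)).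
  by rewrite ltr_pM2r ?divr_gt0 // lt_k //; right.
apply: (lt_le_trans (y := a' / c' * (e / (c - a * s)))).
  rewrite ltr_pM2l // ltr_pM2l // ltf_pV2 ?posrE //.
  apply: ler_ltB => //; apply: (le_lt_trans (y := a * s')).
    by rewrite ler_wpM2r.
  by rewrite ltr_pM2l.
by apply: ler_wpM2r => //; rewrite divr_ge0 // ltW.
Qed.

Theorem proposition8 (R : realType) (n : nat) (phi : R) (Theta : set R)
  (a c a' c' : R) (P P' : probability (R * R)%type R) :
  (2 <= n)%N ->
  compact Theta -> Theta `<=` `[0, +oo[ ->
  setting Theta n a c P -> setting Theta n a' c' P' ->
  (forall A : set R, measurable A -> P (A `*` setT) = P' (A `*` setT)) ->
  a' <= a -> c <= c' ->
  fosd_tilde P P' \/ mps P P' ->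
  a' < a \/ c < c' \/ strict_fosd_tilde P P' \/ strict_mps P P' ->
  forall x x' : R * R -> R,
    friend_eq Theta n a c phi P x ->
    friend_eq Theta n a' c' phi P' x' ->
  forall thi di di' : R,
    Theta thi -> degset n di -> degset n di' -> di' < di ->
    x' (thi, di) - x' (thi, di') < x (thi, di) - x (thi, di') /\
    Ufriend n a' c' phi P' x' thi di - Ufriend n a' c' phi P' x' thi di'
      < Ufriend n a c phi P x thi di - Ufriend n a c phi P x thi di'.
Proof.
move=> n2 cT T0 st st' marg aa cc ord strict x x' eqx eqx'.
move=> thi di di' Tthi Ddi Ddi' dd.
have [[a0 c0] PS as_c _ Ppos] := st; have [[a'0 c'0] PS' as_c' _ _] := st'.
have ss := order_Ext_snd cT PS PS' ord.
have strict_s : a' < a \/ c < c' \/ Ext P' snd < Ext P snd.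
  case: strict => [|[|/(strict_order_Ext_snd cT PS PS' (ltnW n2))]]; tauto.
have s'0 : 0 <= Ext P' snd.
  by apply: (Ext_ge0 cT PS') => [|z /supp_sndP[j _ ->]]; first exact: measurable_snd.
have X'_eq := Ext_friend_eq cT T0 st' eqx'.
rewrite -(Ex_fst_marginal cT T0 PS PS' marg) in X'_eq.
have [A'0 AA k_lt] := spillover_cmp (Ex_fst_gt0 cT PS T0 Ppos) a'0 aa c0 cc s'0 ss
  as_c as_c' strict_s (Ext_friend_eq cT T0 st eqx) X'_eq.
rewrite !(Ufriend_subd cT T0 st eqx) // !(Ufriend_subd cT T0 st' eqx') //.
rewrite !(friend_eq_subd cT T0 st eqx) // !(friend_eq_subd cT T0 st' eqx') //.
have dd0 : 0 < di - di' by rewrite subr_gt0.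
have di'0 : 0 < di' by case: (degsetP Ddi') => j /andP[j0 _] ->; rewrite ltr0n.
have di0 : 0 < di := lt_trans di'0 dd.
have thi0 : 0 <= thi := supp_fst_ge0 T0 (z := (thi, di)) (conj Tthi Ddi).
set w' := thi + _ * (a' * _) / 2; set w := thi + _ * (a * _) / 2.
have w'0 : 0 < w' by rewrite ltr_wpDl // divr_gt0 // mulr_gt0 // addr_gt0.
have ww : w' <= w by rewrite lerD2l ler_pM2r // ler_pM2l // addr_gt0.
split; first by rewrite ltr_pM2l.
apply: (le_lt_trans (ler_wpM2l _ ww)); first by rewrite mulr_ge0 ?ltW ?divr_gt0.
by rewrite ltr_pM2r ?(lt_le_trans w'0 ww) // ltr_pM2l.
Qed.
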